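(* Let $k\ge 3$, $m\ge 2$. Identify $\mathfrak a=\mathfrak{sl}(2,\mathbb R)\times\mathfrak{gl}(m,\mathbb R)$ with its image in $\mathfrak{gl}(V)=\mathfrak{gl}(V_k)\otimes\mathfrak{gl}(W)$, and consider the $\mathfrak a$-module $\mathfrak{gl}(V)/\mathfrak a$ (with the adjoint action). The space of $y$-invariant elements (elements annihilated by $y$) of $\mathfrak{gl}(V)/\mathfrak a$ is the direct sum of (the images of) the $\mathfrak{gl}(m,\mathbb R)$-modules \[ A_2=\mathbb R y\otimes\mathfrak{sl}(W),\qquad A_{i+1}=\mathbb R y^i\otimes\mathfrak{gl}(W),\quad i=2,\dots,k, \] where $y^i$ denotes the $i$-th power of the endomorphism $y$ of $V_k$. Moreover, for every $\phi\in A_i$ the cochain $c_\phi$ on $\mathfrak g_-=\mathbb R x\oplus V$ given by $c_\phi(x\wedge v)=\phi(v)$, $c_\phi(V\wedge V)=0$, has degree $i$.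
   Context: $x=\begin{pmatrix}0&0\\1&0\end{pmatrix}$, $y=\begin{pmatrix}0&1\\0&0\end{pmatrix}$, $h=\begin{pmatrix}-1&0\\0&1\end{pmatrix}$ in $\mathfrak{sl}(2,\mathbb R)$; $V_k=S^k(\mathbb R^2)$ with basis $v^i=f_2^{k-i}f_1^i/i!$ ($f_1,f_2$ the standard basis of $\mathbb R^2$); $W=\mathbb R^m$ the standard $\mathfrak{gl}(m,\mathbb R)$-module; $V=V_k\otimes W$ with the natural faithful action of $\mathfrak a$. $\mathfrak g=\mathfrak a\ltimes V$ ($V$ abelian ideal) is graded by $\mathfrak g_1=\mathbb R y$, $\mathfrak g_0=\mathbb R h\oplus\mathfrak{gl}(m,\mathbb R)$, $\mathfrak g_{-1}=\mathbb R x\oplus v^k\otimes W$, $\mathfrak g_{-i}=v^{k+1-i}\otimes W$ for $2\le i\le k+1$, and $\mathfrak g_-=\bigoplus_{i<0}\mathfrak g_i=\mathbb R x\oplus V$. A cochain $c\in\operatorname{Hom}(\wedge^2\mathfrak g_-,\mathfrak g)$ has degree $r$ if $c(\mathfrak g_i\wedge\mathfrak g_j)\subset\mathfrak g_{i+j+r}$ for all $i,j$. *)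

From HB Require Import structures.
From mathcomp Require Import all_boot all_order all_algebra.
From mathcomp Require Import mxtens.
From mathcomp Require Import reals.
Set Implicit Arguments. Unset Strict Implicit. Unset Printing Implicit Defensive.
Import Order.TTheory GRing.Theory Num.Theory.
Local Open Scope ring_scope.

Section Setup.
Variable R : realType.

Definition x2 : 'M[R]_2 := \matrix_(i, j) (if (i == 1) && (j == 0) then 1 else 0).
Definition y2 : 'M[R]_2 := \matrix_(i, j) (if (i == 0) && (j == 1) then 1 else 0).
Definition h2 : 'M[R]_2 :=
  \matrix_(i, j) (if i == j then (if i == 0 then -1 else 1) else 0).

Definition is_sl2 (X : 'M[R]_2) : Prop := \tr X = 0.

(* The natural action of gl(2,R) (as derivations) on V_k = S^k(R^2),
   written in the basis v^j = f2^(k-j) f1^j / j!, j = 0..k, acting on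
   column vectors: entry (i,j) is the v^i-coefficient of X . v^j.
   With X f1 = X00 f1 + X10 f2 and X f2 = X01 f1 + X11 f2 one gets
   X . v^j = (k-j)(j+1) X01 v^(j+1) + ((k-j) X11 + j X00) v^j + X10 v^(j-1). *)
Definition rhok (k : nat) (X : 'M[R]_2) : 'M[R]_k.+1 :=
  \matrix_(i, j)
    (if (i : nat) == j.+1 then ((k - j) * j.+1)%:R * X 0 1
     else if (i : nat) == j then (k - j)%:R * X 1 1 + j%:R * X 0 0
     else if (i : nat).+1 == j then X 1 0
     else 0).

Definition vk (k : nat) (j : 'I_k.+1) : 'cV[R]_k.+1 := delta_mx j 0.

(* V = V_k (x) W, W = R^m, as column vectors of size (k+1)*m;
   gl(V) = 'M_((k+1)*m), with gl(V_k) (x) gl(W) realised by the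
   Kronecker product [*t]. *)
Definition glV (k m : nat) := 'M[R]_(k.+1 * m).
Definition vecV (k m : nat) := 'cV[R]_(k.+1 * m).

Definition in_a (k m : nat) (T : glV k m) : Prop :=
  exists (X : 'M[R]_2) (B : 'M[R]_m),
    is_sl2 X /\ T = rhok k X *t (1%:M : 'M[R]_m) + (1%:M : 'M[R]_k.+1) *t B.

Definition brV (k m : nat) (S T : glV k m) : glV k m := S *m T - T *m S.

Definition yV (k m : nat) : glV k m := rhok k y2 *t (1%:M : 'M[R]_m).

(* T + a is annihilated by y in gl(V)/a  iff  [y, T] lies in a. *)
Definition y_invariant_mod_a (k m : nat) (T : glV k m) : Prop :=
  in_a (brV (yV k m) T).

Definition in_A (k m : nat) (j : nat) (T : glV k m) : Prop :=
  (j = 2%N /\ exists B : 'M[R]_m, \tr B = 0 /\ T = rhok k y2 *t B)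
  \/ ((3 <= j <= k.+1)%N /\
      exists B : 'M[R]_m, T = (rhok k y2 ^+ j.-1) *t B).

(* The graded Lie algebra g = a |x V; an element is a triple
   (X in sl(2), B in gl(m), v in V). *)
Definition gelt (k m : nat) := ('M[R]_2 * 'M[R]_m * vecV k m)%type.

Definition in_vW (k m : nat) (j : 'I_k.+1) (v : vecV k m) : Prop :=
  exists w : 'cV[R]_m, v = vk j *t w.

Definition in_g (k m : nat) (n : int) (z : gelt k m) : Prop :=
  let: (X, B, v) := z in
  if n == 1 then (exists t : R, X = t *: y2) /\ B = 0 /\ v = 0
  else if n == 0 then (exists t : R, X = t *: h2) /\ v = 0
  else if n == -1 then (exists t : R, X = t *: x2) /\ B = 0 /\ in_vW (@ord_max k) v
  else if (- (k.+1)%:Z <= n) && (n <= -2) then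
    X = 0 /\ B = 0 /\ exists j : 'I_k.+1, (j%:Z - (k.+1)%:Z = n) /\ in_vW j v
  else X = 0 /\ B = 0 /\ v = 0.

(* g_- = R x + V; an element (t, v) stands for t x + v. *)
Definition gminus (k m : nat) := (R * vecV k m)%type.
Definition emb_minus (k m : nat) (u : gminus k m) : gelt k m :=
  (u.1 *: x2, 0, u.2).

(* A cochain c in Hom(wedge^2 g_-, g), given as an (alternating, bilinear)
   function of two arguments, has degree r if c(g_i /\ g_j) in g_{i+j+r}. *)
Definition cochain_degree (k m : nat) (c : gminus k m -> gminus k m -> gelt k m)
    (r : int) : Prop :=
  forall (i j : int) (u w : gminus k m),
    in_g i (emb_minus u) -> in_g j (emb_minus w) -> in_g (i + j + r) (c u w).

(* The cochain c_phi: c_phi(x /\ v) = phi(v), c_phi(V /\ V) = 0, i.e.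
   c_phi(t x + v, t' x + v') = t phi(v') - t' phi(v). *)
Definition c_phi (k m : nat) (phi : glV k m) (u w : gminus k m) : gelt k m :=
  (0, 0, u.1 *: (phi *m w.2) - w.1 *: (phi *m u.2)).

End Setup.

From HB Require Import structures.
From mathcomp Require Import all_boot all_order all_algebra.
From mathcomp Require Import mxtens.
From mathcomp Require Import reals.
From mathcomp Require Import zify ring lra.
Set Implicit Arguments. Unset Strict Implicit. Unset Printing Implicit Defensive.
Import Order.TTheory GRing.Theory Num.Theory.
Local Open Scope ring_scope.

(* On V_k the element y acts as a single nilpotent Jordan block Y, with
   Y v^j = (k-j)(j+1) v^(j+1); hence the centraliser of Y in gl(V_k) is spanned
   by the powers of Y, and [Y, rho X] = rho [y, X].
   Suppose [y (x) 1, T] = rho X (x) 1 + 1 (x) B and look at the m x m blocks T_cd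
   of T.  Taking traces gives B = 0, and the trace of [Y, T_cc] Y forces
   X_10 = 0, so that X = [y, Z] with Z in Rx + Rh.  Then every block of
   T - rho Z (x) 1 commutes with Y, i.e. T = rho Z (x) 1 + sum_p Y^p (x) C_p.
   The term with p = 0 and the scalar part of C_1 lie in a, the others in the
   A_j.  The sum is direct because Y^p v^0 is a nonzero multiple of v^p, so the
   first column of each block isolates the C_p; and c_phi has degree j for
   phi in A_j because Y^(j-1) (x) C raises the index in V_k by j - 1. *)

Lemma mxtrace_commutator (R : comPzRingType) n (A B : 'M[R]_n) :
  \tr (A *m B - B *m A) = 0.
Proof. by rewrite raddfB /= mxtrace_mulC subrr. Qed.

Lemma mxBE (R : zmodType) m n (A B : 'M[R]_(m, n)) i j : (A - B) i j = A i j - B i j.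
Proof. by rewrite !mxE. Qed.

Section TensorBlocks.
Variable R : comPzRingType.

Lemma tensmxDl m n p q (A A' : 'M[R]_(m, n)) (B : 'M[R]_(p, q)) :
  (A + A') *t B = A *t B + A' *t B.
Proof. by apply/matrixP => i j; rewrite !mxE mulrDl. Qed.

Lemma tensmxDr m n p q (A : 'M[R]_(m, n)) (B B' : 'M[R]_(p, q)) :
  A *t (B + B') = A *t B + A *t B'.
Proof. by apply/matrixP => i j; rewrite !mxE mulrDr. Qed.

Lemma tensmxBr m n p q (A : 'M[R]_(m, n)) (B B' : 'M[R]_(p, q)) :
  A *t (B - B') = A *t B - A *t B'.
Proof. by apply/matrixP => i j; rewrite !mxE mulrBr. Qed.

Lemma tensmxZl m n p q a (A : 'M[R]_(m, n)) (B : 'M[R]_(p, q)) :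
  (a *: A) *t B = a *: (A *t B).
Proof. by apply/matrixP => i j; rewrite !mxE mulrA. Qed.

Lemma tensmxZr m n p q a (A : 'M[R]_(m, n)) (B : 'M[R]_(p, q)) :
  A *t (a *: B) = a *: (A *t B).
Proof. by apply/matrixP => i j; rewrite !mxE mulrCA. Qed.

Lemma tensmxBl m n p q (A A' : 'M[R]_(m, n)) (B : 'M[R]_(p, q)) :
  (A - A') *t B = A *t B - A' *t B.
Proof. by apply/matrixP => i j; rewrite !mxE mulrBl. Qed.

Lemma commutator_tens1l n m (A : 'M[R]_n) (B C : 'M[R]_m) :
  (1%:M *t B) *m (A *t C) - (A *t C) *m (1%:M *t B) = A *t (B *m C - C *m B).
Proof. by rewrite !tensmx_mul !mul1mx !mulmx1 tensmxBr. Qed.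

Lemma commutator_tens1r n m (A A' : 'M[R]_n) (B : 'M[R]_m) :
  (A *t 1%:M) *m (A' *t B) - (A' *t B) *m (A *t 1%:M) = (A *m A' - A' *m A) *t B.
Proof. by rewrite !tensmx_mul !mul1mx !mulmx1 tensmxBl. Qed.

Variables n m : nat.

Definition slice (c d : 'I_m) (T : 'M[R]_(n * m)) : 'M[R]_n :=
  \matrix_(a, b) T (mxtens_index (a, c)) (mxtens_index (b, d)).

Fact slice_is_linear c d : linear (slice c d).
Proof. by move=> x S T; apply/matrixP => a b; rewrite !mxE. Qed.

HB.instance Definition _ c d :=
  GRing.isLinear.Build R 'M[R]_(n * m) 'M[R]_n _ (slice c d) (slice_is_linear c d).

Lemma slice_tens c d (A : 'M[R]_n) (B : 'M[R]_m) : slice c d (A *t B) = B c d *: A.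
Proof. by apply/matrixP => a b; rewrite mxE tensmxE mxE mulrC. Qed.

Lemma slice_inj (S T : 'M[R]_(n * m)) :
  (forall c d, slice c d S = slice c d T) -> S = T.
Proof.
move=> eqST; apply/matrixP => i j.
case: (mxtens_indexP i) => a c; case: (mxtens_indexP j) => b d.
by have /matrixP/(_ a b) := eqST c d; rewrite !mxE.
Qed.

Lemma sum_mxtens_index (F : 'I_(n * m) -> R) :
  \sum_(l < n * m) F l = \sum_(a < n) \sum_(c < m) F (mxtens_index (a, c)).
Proof.
rewrite pair_big /= (reindex (@mxtens_index n m)) /=; first by apply: eq_bigr => -[].
by exists (@mxtens_unindex n m) => ? _; rewrite (mxtens_indexK, mxtens_unindexK).
Qed.

Lemma slice_tens1_mull c d (A : 'M[R]_n) (T : 'M[R]_(n * m)) :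
  slice c d ((A *t (1%:M : 'M_m)) *m T) = A *m slice c d T.
Proof.
apply/matrixP => a b; rewrite !mxE sum_mxtens_index; apply: eq_bigr => a' _.
rewrite (bigD1 c) //= big1 ?addr0 => [|c' /negbTE nc']; rewrite tensmxE !mxE.
  by rewrite eqxx mulr1.
by rewrite eq_sym nc' mulr0 mul0r.
Qed.

Lemma slice_tens1_mulr c d (A : 'M[R]_n) (T : 'M[R]_(n * m)) :
  slice c d (T *m (A *t (1%:M : 'M_m))) = slice c d T *m A.
Proof.
apply/matrixP => a b; rewrite !mxE sum_mxtens_index; apply: eq_bigr => a' _.
rewrite (bigD1 d) //= big1 ?addr0 => [|d' /negbTE nd']; rewrite tensmxE !mxE.
  by rewrite eqxx mulr1.
by rewrite nd' !mulr0.
Qed.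

End TensorBlocks.

Section ModuleVk.
Variables (R : realType) (k : nat).
Local Notation Y := (rhok k (y2 R)).

Definition ycoef (j : nat) : R := ((k - j) * j.+1)%:R.

Lemma ycoef_neq0 j : (j < k)%N -> ycoef j != 0.
Proof. by move=> jk; rewrite pnatr_eq0 muln_eq0 negb_or subn_eq0 -ltnNge jk. Qed.

Lemma ycoefk : ycoef k = 0.
Proof. by rewrite /ycoef subnn. Qed.

Lemma rhok_y2E (i j : 'I_k.+1) : Y i j = if (i : nat) == j.+1 then ycoef j else 0.
Proof. by rewrite !mxE /= mulr1 !mulr0 add0r; do 3 case: ifP => //. Qed.

Lemma mulYmx p (A : 'M[R]_(k.+1, p)) i j :
  (Y *m A) i j = if (0 < i)%N then ycoef i.-1 * A (inord i.-1) j else 0.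
Proof.
rewrite mxE; case: posnP => [i0|i_gt0].
  by rewrite big1 // => l _; rewrite rhok_y2E i0 mul0r.
rewrite (bigD1 (inord i.-1)) //= big1 ?addr0 => [|l /negbTE nl].
  have ik : (i.-1 < k.+1)%N by rewrite (leq_ltn_trans (leq_pred _)).
  by rewrite rhok_y2E inordK // prednK // eqxx.
rewrite rhok_y2E; case: eqP => [il|_]; last by rewrite mul0r.
by move: nl; rewrite il /= -val_eqE /= inordK ?eqxx.
Qed.

Lemma mulmxY p (A : 'M[R]_(p, k.+1)) i j :
  (A *m Y) i j = if (j < k)%N then A i (inord j.+1) * ycoef j else 0.
Proof.
rewrite mxE; case: ltnP => [jk|kj].
  rewrite (bigD1 (inord j.+1)) //= big1 ?addr0 => [|l /negbTE nl].
    by rewrite rhok_y2E inordK // eqxx.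
  rewrite rhok_y2E; case: eqP => [lj|_]; last by rewrite mulr0.
  by move: nl; rewrite -val_eqE /= inordK // -lj eqxx.
rewrite big1 // => l _; rewrite rhok_y2E; case: eqP => [lj|_]; last by rewrite mulr0.
by have := ltn_ord l; rewrite lj ltnS leqNgt (leq_ltn_trans kj).
Qed.

Fact rhok_is_linear : linear (@rhok R k).
Proof. by move=> a X X'; apply/matrixP => i j; rewrite !mxE; repeat case: ifP => _; ring. Qed.

HB.instance Definition _ := GRing.isLinear.Build R 'M[R]_2 'M[R]_k.+1 _ (@rhok R k) rhok_is_linear.

Lemma sum_ord2 (F : 'I_2 -> R) : \sum_(i < 2) F i = F 0 + F 1.
Proof. by rewrite big_ord_recl big_ord1; congr (_ + F _); apply: val_inj. Qed.

Lemma mxtrace_y2 : \tr (y2 R) = 0.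
Proof. by rewrite /mxtrace sum_ord2 !mxE /= addr0. Qed.

Lemma mxtrace_rhok (X : 'M[R]_2) : \tr X = 0 -> \tr (rhok k X) = 0.
Proof.
rewrite /mxtrace sum_ord2 => trX.
have -> : \sum_(i < k.+1) rhok k X i i =
          \sum_(i < k.+1) ((k - i)%:R * X 1 1 + i%:R * X 0 0).
  by apply: eq_bigr => i _; rewrite mxE (ltn_eqF (ltnSn i)) eqxx.
rewrite big_split /= -!mulr_suml.
have -> : \sum_(i < k.+1) (k - i)%:R = \sum_(i < k.+1) i%:R :> R.
  rewrite (reindex_inj rev_ord_inj) /=; apply: eq_bigr => i _.
  by rewrite subKn // -ltnS.
by rewrite -mulrDr addrC trX mulr0.
Qed.

Lemma commutator_y2 (X : 'M[R]_2) :
  let W := y2 R *m X - X *m y2 R in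
  [/\ W 0 0 = X 1 0, W 0 1 = X 1 1 - X 0 0, W 1 0 = 0 & W 1 1 = - X 1 0].
Proof. by rewrite /= !mxE !sum_ord2 !mxE /=; split; ring. Qed.

Lemma commutator_Y_rhok (X : 'M[R]_2) :
  Y *m rhok k X - rhok k X *m Y = rhok k (y2 R *m X - X *m y2 R).
Proof.
have [W00 W01 W10 W11] := commutator_y2 X.
apply/matrixP => i j; rewrite mxBE mulYmx mulmxY [RHS]mxE W00 W01 W10 W11.
have hi := ltn_ord i; have hj := ltn_ord j.
case jk: (j < k)%N; case: (posnP i) => i0; rewrite /rhok ?mxE ?i0 /=;
  rewrite ?inordK ?prednK ?ltnS ?leq_pred ?(ltnW hi) //; try lia.
all: move: hi hj jk i0; rewrite /ycoef.
all: generalize (nat_of_ord i) (nat_of_ord j) => a b.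
all: move=> *; repeat (case: ifP => ?); try (exfalso; lia).
all: try by rewrite ?mul0r ?mulr0 ?subrr.
all: try lia.
- have -> : b = 0%N by lia.
  by rewrite !natrM subn0; ring.
- have -> : a.-1 = b.+1 by lia.
  by ring.
- have -> : a.-1 = b by lia.
  by rewrite !natrM !natrB; [ring | lia | lia].
- have -> : a = b by lia.
  have -> : (k - b.-1 = (k - b).+1)%N by lia.
  by rewrite prednK ?natrM -?natr1; [ring | lia].
- have -> : b = 0%N by lia.
  have -> : k = 0%N by lia.
  by rewrite subn0; ring.
- have [-> ->] : a = k /\ b = k by lia.
  have -> : (k - k.-1 = 1)%N by lia.
  by rewrite subnn prednK ?mul1n; [ring | lia].
Qed.

Definition ycoef_prod (l p : nat) : R := \prod_(l <= t < l + p) ycoef t.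

Lemma ycoef_prod_neq0 l p : (l + p <= k)%N -> ycoef_prod l p != 0.
Proof.
move=> lpk; rewrite prodf_seq_neq0; apply/allP => t /[!mem_index_iota] /andP[_ tlp].
exact/ycoef_neq0/(leq_trans tlp).
Qed.

Lemma ycoef_prod_eq0 l p : (l <= k < l + p)%N -> ycoef_prod l p = 0.
Proof.
move=> lkp; apply/eqP; rewrite prodf_seq_eq0; apply/hasP; exists k.
  by rewrite mem_index_iota.
by rewrite ycoefk eqxx.
Qed.

(* For l = k both sides vanish, since ycoef k = 0, whatever [inord k.+1] is. *)
Lemma mulY_vk (l : 'I_k.+1) : Y *m vk R l = ycoef l *: vk R (inord l.+1).
Proof.
apply/matrixP => i j; rewrite [j]ord1 mulYmx !mxE !eqxx !andbT.
have [lk|kl] := ltnP l k; last first.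
  have lk : (l : nat) = k by apply/eqP; rewrite eqn_leq kl -ltnS ltn_ord.
  rewrite lk ycoefk mul0r; case: posnP => // i0.
  have ik : (i.-1 < k)%N by rewrite -ltnS prednK ?ltn_ord.
  by rewrite -val_eqE /= inordK ?lk ?ltn_eqF ?mulr0 // ltnW.
rewrite -[in RHS]val_eqE /= inordK //; case: posnP => [->|i0]; first by rewrite mulr0.
rewrite -val_eqE /= inordK ?(leq_ltn_trans (leq_pred _)) //.
by rewrite -(inj_eq succn_inj) prednK //; case: eqP => [->|]; rewrite ?mulr0.
Qed.

Lemma powY_vk (p l : nat) : (l <= k)%N ->
  Y ^+ p *m vk R (inord l) = ycoef_prod l p *: vk R (inord (l + p)).
Proof.
move=> lk; elim: p => [|p IHp].
  by rewrite expr0 mul1mx /ycoef_prod addn0 big_geq // scale1r.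
rewrite exprS -mulmxE -mulmxA IHp -scalemxAr.
have [lpk|klp] := leqP (l + p) k; last first.
  by rewrite !ycoef_prod_eq0 ?scale0r ?scaler0 // ?lk ?klp // addnS ltnS ltnW.
rewrite mulY_vk inordK // scalerA addnS /ycoef_prod addnS big_nat_recr //=.
exact: leq_addr.
Qed.

Lemma powY_entry (p : 'I_k.+1) (q : nat) : (q <= k)%N ->
  (Y ^+ q) p ord0 = if (p : nat) == q then ycoef_prod 0 q else 0.
Proof.
move=> qk; have := powY_vk q (leq0n k); rewrite add0n.
move=> /matrixP/(_ p ord0); rewrite /vk -colE !mxE (inord_val ord0 : inord 0 = ord0).
rewrite -val_eqE /= inordK // eqxx andbT => ->.
by case: eqP; rewrite ?mulr1 ?mulr0.
Qed.

Lemma commute_Y_powE (M : 'M[R]_k.+1) : Y *m M = M *m Y ->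
  M = \sum_(p < k.+1) (M p ord0 / ycoef_prod 0 p) *: Y ^+ p.
Proof.
move=> cMY; set N := \sum_(p < k.+1) _.
have cMYp q : M *m Y ^+ q = Y ^+ q *m M.
  elim: q => [|q IHq]; first by rewrite expr0 mul1mx mulmx1.
  by rewrite exprS -mulmxE mulmxA -cMY -mulmxA IHq mulmxA.
have cNYp q : N *m Y ^+ q = Y ^+ q *m N.
  rewrite mulmx_suml mulmx_sumr; apply: eq_bigr => p _.
  by rewrite -scalemxAl -scalemxAr mulmxE -!exprD addnC.
have MN0 : M *m vk R ord0 = N *m vk R ord0.
  apply/matrixP => i j; have ik : (i <= k)%N by rewrite -ltnS.
  rewrite [j]ord1 /vk -!colE !mxE summxE.
  rewrite (bigD1 i) //= big1 ?addr0 => [|p /negbTE ip]; rewrite mxE.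
    by rewrite powY_entry // eqxx divfK // ycoef_prod_neq0.
  rewrite powY_entry; last by rewrite -ltnS.
  by move: ip; rewrite -val_eqE eq_sym => /= ->; rewrite mulr0.
suff MN (q : 'I_k.+1) : M *m vk R q = N *m vk R q.
  by apply/matrixP => i q; have /matrixP/(_ i 0) := MN q; rewrite /vk -!colE !mxE.
have qk : (q <= k)%N by rewrite -ltnS.
have vqE : vk R q = (ycoef_prod 0 q)^-1 *: (Y ^+ q *m vk R ord0).
  rewrite -(inord_val ord0 : inord 0 = ord0) powY_vk // add0n inord_val.
  by rewrite scalerA mulVf ?ycoef_prod_neq0 // scale1r.
by rewrite vqE -!scalemxAr !mulmxA cMYp cNYp -!mulmxA MN0.
Qed.

Lemma mxtrace_rhok_mulY (X : 'M[R]_2) :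
  \tr (rhok k X *m Y) = X 1 0 * \sum_(a < k.+1) ycoef a.
Proof.
rewrite mulr_sumr; apply: eq_bigr => a _; rewrite mulmxY.
case: ltnP => [ak|ka]; last first.
  have -> : (a : nat) = k by apply/eqP; rewrite eqn_leq ka -ltnS ltn_ord.
  by rewrite ycoefk !mulr0.
by rewrite mxE inordK // !eqxx (ltn_eqF (ltnW (ltnSn a.+1))) (ltn_eqF (ltnSn a)) mulrC.
Qed.

Lemma sum_ycoef_gt0 : (0 < k)%N -> 0 < \sum_(a < k.+1) ycoef a.
Proof.
move=> k_gt0; rewrite (bigD1 ord0) //= ltr_wpDr //.
  by apply: sumr_ge0 => a _; apply: ler0n.
by rewrite ltr0n muln1 subn0.
Qed.

Lemma commutator_Y_lower_eq0 (M : 'M[R]_k.+1) b (X : 'M[R]_2) : (0 < k)%N ->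
  Y *m M - M *m Y = rhok k X + b *: 1%:M -> X 1 0 = 0.
Proof.
move=> k_gt0 eqMX.
have : \tr ((Y *m M - M *m Y) *m Y) = 0.
  by rewrite mulmxBl -mulmxA mxtrace_commutator.
rewrite eqMX mulmxDl mxtraceD -scalemxAl mul1mx mxtraceZ mxtrace_rhok_mulY.
rewrite (mxtrace_rhok mxtrace_y2) mulr0 addr0 => /eqP.
by rewrite mulf_eq0 (gt_eqF (sum_ycoef_gt0 k_gt0)) orbF => /eqP.
Qed.

Definition ad_y2_inv (X : 'M[R]_2) : 'M[R]_2 := X 0 0 *: x2 R + (X 0 1 / 2) *: h2 R.

Lemma mxtrace_ad_y2_inv (X : 'M[R]_2) : \tr (ad_y2_inv X) = 0.
Proof. by rewrite /mxtrace sum_ord2 !mxE /=; ring. Qed.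

Lemma mx2P (A B : 'M[R]_2) : A 0 0 = B 0 0 -> A 0 1 = B 0 1 ->
  A 1 0 = B 1 0 -> A 1 1 = B 1 1 -> A = B.
Proof.
move=> e00 e01 e10 e11; apply/matrixP => i j.
have ord2E (l : 'I_2) : l = 0 \/ l = 1.
  by case: l => [[|[|//]] ?]; [left | right]; apply: val_inj.
by case: (ord2E i) => ->; case: (ord2E j) => ->.
Qed.

Lemma ad_y2_invK (X : 'M[R]_2) : \tr X = 0 -> X 1 0 = 0 ->
  y2 R *m ad_y2_inv X - ad_y2_inv X *m y2 R = X.
Proof.
rewrite /mxtrace sum_ord2 => trX X10.
by apply: mx2P; rewrite !mxBE !mxE !sum_ord2 !mxE /= ?X10; lra.
Qed.

Lemma solve_commutator_Y (M : 'M[R]_k.+1) s b (X : 'M[R]_2) : \tr X = 0 -> X 1 0 = 0 ->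
  Y *m M - M *m Y = s *: rhok k X + b *: 1%:M ->
  let M' := M - s *: rhok k (ad_y2_inv X) in
  M = s *: rhok k (ad_y2_inv X) + \sum_(p < k.+1) (M' p ord0 / ycoef_prod 0 p) *: Y ^+ p.
Proof.
move=> trX X10 eqMX M'.
have b0 : b = 0.
  have := mxtrace_commutator Y M; rewrite eqMX mxtraceD mxtraceZ mxtrace_rhok //.
  by rewrite mulr0 add0r scalemx1 mxtrace_scalar => /eqP; rewrite mulrn_eq0 => /eqP.
suff cM' : Y *m M' = M' *m Y by rewrite -(commute_Y_powE cM') /M' addrC subrK.
apply/eqP; rewrite -subr_eq0.
have -> : Y *m M' - M' *m Y =
    (Y *m M - M *m Y) - s *: (Y *m rhok k (ad_y2_inv X) - rhok k (ad_y2_inv X) *m Y).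
  by rewrite /M' mulmxBr mulmxBl -scalemxAr -scalemxAl scalerBr !opprD !opprK addrACA.
by rewrite commutator_Y_rhok ad_y2_invK // eqMX b0 scale0r addr0 subrr.
Qed.

End ModuleVk.

Section GlV.
Variables (R : realType) (k m : nat).
Local Notation Y := (rhok k (y2 R)).
Local Notation ycoef_prod := (ycoef_prod R k).

Lemma in_A_tens j (T : glV R k m) : in_A j T ->
  exists C : 'M[R]_m, T = Y ^+ j.-1 *t C /\ (j = 2%N -> \tr C = 0).
Proof.
move=> [[-> [C [trC ->]]] | [jk [C ->]]]; first by exists C; rewrite expr1.
by exists C; split=> // j2; move: jk; rewrite j2.
Qed.

Lemma in_A_commutator_tens1 j (T : glV R k m) (B : 'M[R]_m) :
  in_A j T -> in_A j (brV (1%:M *t B) T).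
Proof.
rewrite /brV => -[[-> [C [trC ->]]] | [jk [C ->]]]; rewrite commutator_tens1l.
  by left; split=> //; exists (B *m C - C *m B); rewrite mxtrace_commutator.
by right; split=> //; exists (B *m C - C *m B).
Qed.

Lemma in_a0 : in_a (0 : glV R k m).
Proof. by exists 0, 0; rewrite /is_sl2 mxtrace0 raddf0 tens0mx tensmx0 addr0. Qed.

Lemma in_a_commutator_yV (a0 : glV R k m) : in_a a0 -> in_a (brV (yV R k m) a0).
Proof.
move=> [X [B [trX ->]]]; exists (y2 R *m X - X *m y2 R), 0.
split; first exact: mxtrace_commutator.
rewrite /brV /yV mulmxDr mulmxDl opprD addrACA commutator_tens1r commutator_Y_rhok.
by rewrite !tensmx_mul !mul1mx !mulmx1 subrr tensmx0 !addr0.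
Qed.

Lemma commute_yV_in_A j (T : glV R k m) : in_A j T ->
  yV R k m *m T = T *m yV R k m.
Proof.
move=> /in_A_tens [C [-> _]].
by rewrite !tensmx_mul mul1mx mulmx1 mulmxE -exprS -exprSr.
Qed.

Lemma y_invariant_mod_a_sum (a0 : glV R k m) (phi : nat -> glV R k m) : in_a a0 ->
  (forall j, (2 <= j <= k.+1)%N -> in_A j (phi j)) ->
  y_invariant_mod_a (a0 + \sum_(2 <= j < k.+2) phi j).
Proof.
move=> a0_a phiA; rewrite /y_invariant_mod_a.
suff -> : brV (yV R k m) (a0 + \sum_(2 <= j < k.+2) phi j) = brV (yV R k m) a0.
  exact: in_a_commutator_yV.
rewrite /brV mulmxDr mulmxDl opprD addrACA mulmx_sumr mulmx_suml.
rewrite (eq_big_nat _ _ (F2 := fun j => phi j *m yV R k m)) ?subrr ?addr0 //.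
by move=> j /andP[j_ge2 jk]; apply/commute_yV_in_A/phiA; rewrite j_ge2.
Qed.

Lemma y_invariant_mod_a_tensE (T : glV R k m) : (0 < k)%N -> (0 < m)%N ->
  y_invariant_mod_a T -> exists (Z : 'M[R]_2) (C : nat -> 'M[R]_m),
    is_sl2 Z /\ T = rhok k Z *t 1%:M + \sum_(p < k.+1) Y ^+ p *t C p.
Proof.
move=> k_gt0 m_gt0 [X [B [trX eqT]]].
have sliceE c d : Y *m slice c d T - slice c d T *m Y =
    (1%:M : 'M_m) c d *: rhok k X + B c d *: 1%:M.
  have := congr1 (slice c d) eqT; rewrite /brV /yV raddfB /= raddfD /=.
  by rewrite slice_tens1_mull slice_tens1_mulr !slice_tens.
have X10 : X 1 0 = 0.
  pose c0 := Ordinal m_gt0; apply: (commutator_Y_lower_eq0 (M := slice c0 c0 T) k_gt0).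
  by rewrite sliceE mxE eqxx scale1r.
pose Z := ad_y2_inv X.
pose C p := \matrix_(c, d)
  ((slice c d T - (1%:M : 'M_m) c d *: rhok k Z) (inord p) ord0 / ycoef_prod 0 p).
exists Z, C; split; first exact: mxtrace_ad_y2_inv.
apply: slice_inj => c d; rewrite raddfD raddf_sum /= slice_tens.
rewrite {1}(solve_commutator_Y trX X10 (sliceE c d)); congr (_ + _).
by apply: eq_bigr => p _; rewrite slice_tens [C p c d]mxE inord_val.
Qed.

Lemma big_ord_recl_shift2 (V : nmodType) n (G : nat -> V) :
  \sum_(p < n.+1) G p = G 0%N + \sum_(2 <= j < n.+2) G j.-1.
Proof.
rewrite big_ord_recl (big_addn 0 n.+2 2) subSS subn1 /= big_mkord.
by congr (_ + _); apply: eq_bigr => i _; rewrite addn2.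
Qed.

Lemma tens_powY_sum_split (Z : 'M[R]_2) (C : nat -> 'M[R]_m) :
  (0 < k)%N -> (0 < m)%N -> is_sl2 Z ->
  exists (a0 : glV R k m) (phi : nat -> glV R k m),
    [/\ in_a a0, forall j, (2 <= j <= k.+1)%N -> in_A j (phi j) &
        rhok k Z *t 1%:M + \sum_(p < k.+1) Y ^+ p *t C p = a0 + \sum_(2 <= j < k.+2) phi j].
Proof.
move=> k_gt0 m_gt0 trZ.
pose t := \tr (C 1%N) / m%:R.
pose C' p := if p == 1%N then C 1%N - t%:M else C p.
exists (rhok k (Z + t *: y2 R) *t 1%:M + 1%:M *t C 0%N), (fun j => Y ^+ j.-1 *t C' j.-1).
split.
- exists (Z + t *: y2 R), (C 0%N); split=> //.
  by rewrite /is_sl2 mxtraceD mxtraceZ trZ mxtrace_y2 mulr0 addr0.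
- move=> j /andP[j_ge2 jk]; have [->|j_ne2] := eqVneq j 2%N.
    left; split=> //; exists (C 1%N - t%:M); split; last by rewrite expr1.
    have m_neq0 : m%:R != 0 :> R by rewrite pnatr_eq0 -lt0n.
    by rewrite raddfB /= mxtrace_scalar /t -[_ / _ *+ m]mulr_natr divfK // subrr.
  right; split; first by rewrite ltn_neqAle eq_sym j_ne2 j_ge2.
  by exists (C j.-1); rewrite /C' -(inj_eq succn_inj) prednK ?(negPf j_ne2) // ltnW.
have splitC1 : \sum_(p < k.+1) Y ^+ p *t C p =
               Y *t t%:M + \sum_(p < k.+1) Y ^+ p *t C' p.
  have one_k : (1 < k.+1)%N by [].
  rewrite (bigD1 (Ordinal one_k)) // [in RHS](bigD1 (Ordinal one_k)) //= addrA.
  congr (_ + _); first by rewrite /C' /= expr1 tensmxBr addrC subrK.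
  apply: eq_bigr => p p_neq1; rewrite /C' ifF //.
  by apply: contraNF p_neq1 => /eqP p1; apply/eqP/val_inj.
rewrite splitC1 (big_ord_recl_shift2 k (fun p => Y ^+ p *t C' p)) /= expr0.
rewrite raddfD /= linearZZ tensmxDl tensmxZl -tensmxZr scalemx1 /C' /=.
by rewrite !addrA [_ + 1%:M *t _]addrC.
Qed.

Lemma in_A_slice_col0 j (T : glV R k m) c d (p : 'I_k.+1) : (2 <= j <= k.+1)%N ->
  in_A j T -> (p : nat) != j.-1 -> slice c d T p ord0 = 0.
Proof.
move=> /andP[j_ge2 jk] /in_A_tens [C [-> _]] p_neq.
have jk' : (j.-1 <= k)%N by rewrite -ltnS prednK // ltnW.
by rewrite slice_tens mxE powY_entry // (negPf p_neq) mulr0.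
Qed.

Lemma slice_sum_in_A_col0 (phi : nat -> glV R k m) j (C : 'M[R]_m) c d (p : 'I_k.+1) :
  (forall i, (2 <= i <= k.+1)%N -> in_A i (phi i)) -> (2 <= j <= k.+1)%N ->
  phi j = Y ^+ j.-1 *t C -> (p : nat) = j.-1 ->
  slice c d (\sum_(2 <= i < k.+2) phi i) p ord0 = C c d * ycoef_prod 0 j.-1.
Proof.
move=> phiA /andP[j_ge2 jk] phijE pE.
have jk' : (j.-1 <= k)%N by rewrite -ltnS prednK // ltnW.
rewrite raddf_sum summxE (bigD1_seq j) ?mem_index_iota ?iota_uniq ?j_ge2 //=.
rewrite big1_seq ?addr0 => [|i /andP[i_neq /[!mem_index_iota] ir]].
  by rewrite phijE slice_tens mxE powY_entry // pE eqxx.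
have /andP[i_ge2 _] := ir.
apply: (in_A_slice_col0 _ _ _ (phiA i ir)) => //; rewrite pE; apply: contra i_neq.
by move=> /eqP /(congr1 succn); rewrite !prednK ?(ltnW i_ge2) ?(ltnW j_ge2) // => ->.
Qed.

Lemma slice_in_a_col0 (X : 'M[R]_2) (B : 'M[R]_m) c d (p : 'I_k.+1) : (0 < p)%N ->
  slice c d (rhok k X *t 1%:M + 1%:M *t B) p ord0 =
  (c == d)%:R * (if (p : nat) == 1%N then k%:R * X 0 1 else 0).
Proof.
move=> p_gt0; rewrite raddfD /= !slice_tens [LHS]mxE !mxE /= subn0 muln1.
by rewrite (gtn_eqF p_gt0) (gtn_eqF p_gt0 : (p == ord0) = false) mulr0 addr0.
Qed.

Lemma in_A_sum_in_a_eq0 (phi : nat -> glV R k m) : (0 < k)%N -> (0 < m)%N ->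
  (forall j, (2 <= j <= k.+1)%N -> in_A j (phi j)) ->
  in_a (\sum_(2 <= j < k.+2) phi j) ->
  forall j, (2 <= j <= k.+1)%N -> phi j = 0.
Proof.
move=> k_gt0 m_gt0 phiA [X [B [trX eqS]]] j jr.
have /andP[j_ge2 jk] := jr.
have [C [phijE trC]] := in_A_tens (phiA j jr).
have jk' : (j.-1 < k.+1)%N by rewrite prednK // ltnW.
have p_gt0 : (0 < j.-1)%N by rewrite -ltnS prednK // ltnW.
have entryE c d :
    C c d * ycoef_prod 0 j.-1 = (c == d)%:R * (if j.-1 == 1%N then k%:R * X 0 1 else 0).
  rewrite -(slice_sum_in_A_col0 c d (p := Ordinal jk') phiA jr phijE) // eqS.
  exact: slice_in_a_col0.
suff C0 : C = 0 by rewrite phijE C0 tensmx0.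
have coef_neq0 : ycoef_prod 0 j.-1 != 0 by rewrite ycoef_prod_neq0.
have [j2|j_neq2] := eqVneq j 2%N; last first.
  apply/matrixP => c d; have := entryE c d; rewrite ifF ?mulr0.
    by move/eqP; rewrite mulf_eq0 (negPf coef_neq0) orbF mxE => /eqP.
  by apply/negbTE; rewrite -(inj_eq succn_inj) prednK ?(ltnW j_ge2).
have k_neq0 : k%:R != 0 :> R by rewrite pnatr_eq0 -lt0n.
have CE : C = X 0 1 *: 1%:M.
  apply/matrixP => c d; have := entryE c d.
  rewrite j2 /= /ycoef_prod big_nat1 /ycoef subn0 muln1 mulrCA [RHS]mulrC.
  by move=> /(mulIf k_neq0) ->; rewrite !mxE mulrC.
have := trC j2; rewrite CE mxtraceZ mxtrace1 => /eqP.
by rewrite mulf_eq0 pnatr_eq0 (gtn_eqF m_gt0) orbF => /eqP ->; rewrite scale0r.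
Qed.

Definition in_Vdeg (n : int) (v : vecV R k m) : Prop :=
  v = 0 \/ exists l : 'I_k.+1, l%:Z - (k.+1)%:Z = n /\ in_vW l v.

Lemma in_VdegD n v v' : in_Vdeg n v -> in_Vdeg n v' -> in_Vdeg n (v + v').
Proof.
case=> [->|[l [ln [x ->]]]]; first by rewrite add0r.
case=> [->|[l' [l'n [x' ->]]]]; first by rewrite addr0; right; exists l; split=> //; exists x.
have -> : l' = l by apply: val_inj => /=; lia.
by right; exists l; split=> //; exists (x + x'); rewrite tensmxDr.
Qed.

Lemma in_VdegZ n a v : in_Vdeg n v -> in_Vdeg n (a *: v).
Proof.
case=> [->|[l [ln [x ->]]]]; first by rewrite scaler0; left.
by right; exists l; split=> //; exists (a *: x); rewrite tensmxZr.
Qed.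

Lemma in_Vdeg_tens_powY p (C : 'M[R]_m) n v :
  in_Vdeg n v -> in_Vdeg (n + p%:Z) ((Y ^+ p *t C) *m v).
Proof.
case=> [->|[l [ln [x ->]]]]; first by rewrite mulmx0; left.
have lk : (l <= k)%N by rewrite -ltnS.
rewrite (tensmx_mul (Y ^+ p) C (vk R l) x) -(inord_val l) powY_vk // tensmxZl.
have [lpk|klp] := leqP (l + p) k; last by rewrite ycoef_prod_eq0 ?lk // scale0r; left.
right; exists (inord (l + p)); split; first by rewrite inordK; lia.
by exists (ycoef_prod l p *: (C *m x)); rewrite tensmxZr.
Qed.

Lemma in_g_emb_minus n (u : gminus R k m) : in_g n (emb_minus u) ->
  (u.1 = 0 \/ n = -1) /\ in_Vdeg n u.2.
Proof.
case: u => t v; rewrite /in_g /emb_minus /=.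
have x2_lower s (M : 'M[R]_2) : t *: x2 R = s *: M -> M 1 0 = 0 -> t = 0.
  by move=> /matrixP/(_ 1 0); rewrite !mxE /= mulr1 => -> ->; rewrite mulr0.
have x2_eq0 : t *: x2 R = 0 -> t = 0.
  by move=> tx; apply: (x2_lower 0 0); rewrite ?scale0r ?mxE.
case: ifP => [_ [[s /x2_lower tE] [_ ->]]|_].
  by split; [left; apply: tE; rewrite mxE | left].
case: ifP => [_ [[s /x2_lower tE] ->]|_].
  by split; [left; apply: tE; rewrite mxE | left].
case: ifP => [/eqP -> [_ [_ vW]]|_].
  by split; [right | right; exists ord_max; split=> //=; lia].
case: ifP => [_ [/x2_eq0 -> [_ [l [ln vW]]]]|_ [/x2_eq0 -> [_ ->]]].
  by split; [left | right; exists l].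
by split; left.
Qed.

Lemma in_g_vec n v : in_Vdeg n v -> in_g n ((0, 0, v) : gelt R k m).
Proof.
have zero_line (M : 'M[R]_2) : exists s : R, 0 = s *: M by exists 0; rewrite scale0r.
case=> [->|[l [ln vW]]].
  rewrite /in_g; case: ifP => _; first by split; [apply: zero_line | split].
  case: ifP => _; first by split; [apply: zero_line |].
  case: ifP => _; first by split; [apply: zero_line | split => //; exists 0; rewrite tensmx0].
  case: ifP => [/andP [n_ge n_le]|_] //; split=> //; split=> //.
  exists (inord (absz (n + (k.+1)%:Z))); split; last by exists 0; rewrite tensmx0.
  by rewrite inordK; lia.
have lk := ltn_ord l; rewrite /in_g; case: ifP => [/eqP|_]; first lia.
case: ifP => [/eqP|_]; first lia.
case: ifP => [/eqP n1|/eqP n_neq1].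
  split; first exact: zero_line.
  by split=> //; rewrite (_ : ord_max = l) //; apply: val_inj => /=; lia.
case: ifP => [_|/negP]; first by split=> //; split=> //; exists l.
by case; apply/andP; split; lia.
Qed.

Lemma c_phi_degree j (phi : glV R k m) : (2 <= j)%N -> in_A j phi ->
  cochain_degree (c_phi phi) j%:Z.
Proof.
move=> j_ge2 /in_A_tens [C [-> _]] i i' u w uE wE.
have [u1 u2] := in_g_emb_minus uE; have [w1 w2] := in_g_emb_minus wE.
rewrite /c_phi -scaleNr; apply/in_g_vec/in_VdegD.
  case: u1 => [->|i_eq]; first by rewrite scale0r; left.
  have -> : i + i' + j%:Z = i' + (j.-1)%:Z by lia.
  exact/in_VdegZ/in_Vdeg_tens_powY.
case: w1 => [->|i'_eq]; first by rewrite oppr0 scale0r; left.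
have -> : i + i' + j%:Z = i + (j.-1)%:Z by lia.
exact/in_VdegZ/in_Vdeg_tens_powY.
Qed.

End GlV.

Unset Implicit Arguments. Set Strict Implicit.
Theorem theorem2 (R : realType) (k m : nat) (hk : (3 <= k)%N) (hm : (2 <= m)%N) :
  (* each A_j is a gl(m,R)-submodule of gl(V) (adjoint action of 1 (x) B) *)
  (forall (j : nat) (T : glV R k m) (B : 'M[R]_m),
      (2 <= j <= k.+1)%N -> in_A j T ->
      in_A j (brV ((1%:M : 'M[R]_k.+1) *t B) T)) /\
  (* the y-invariants of gl(V)/a are the sum of the images of the A_j *)
  (forall T : glV R k m,
      y_invariant_mod_a T <->
      exists (a0 : glV R k m) (phi : nat -> glV R k m),
        in_a a0 /\ (forall j, (2 <= j <= k.+1)%N -> in_A j (phi j)) /\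
        T = a0 + \sum_(2 <= j < k.+2) phi j) /\
  (* ... and this sum of images is direct *)
  (forall phi : nat -> glV R k m,
      (forall j, (2 <= j <= k.+1)%N -> in_A j (phi j)) ->
      in_a (\sum_(2 <= j < k.+2) phi j) ->
      forall j, (2 <= j <= k.+1)%N -> in_a (phi j)) /\
  (* for phi in A_j, the cochain c_phi has degree j *)
  (forall (j : nat) (phi : glV R k m),
      (2 <= j <= k.+1)%N -> in_A j phi -> cochain_degree (c_phi phi) j%:Z).
Proof.
have k_gt0 : (0 < k)%N by apply: leq_trans hk.
have m_gt0 : (0 < m)%N by apply: leq_trans hm.
split; first by move=> j T B _; apply: in_A_commutator_tens1.
split.
  move=> T; split; last first.
    by move=> [a0 [phi [a0_a [phiA ->]]]]; apply: y_invariant_mod_a_sum.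
  move=> /(y_invariant_mod_a_tensE k_gt0 m_gt0) [Z [C [trZ ->]]].
  have [a0 [phi [a0_a phiA ->]]] := tens_powY_sum_split C k_gt0 m_gt0 trZ.
  by exists a0, phi.
split.
  move=> phi phiA sum_a j jr.
  by rewrite (in_A_sum_in_a_eq0 k_gt0 m_gt0 phiA sum_a jr); apply: in_a0.
by move=> j phi /andP[j_ge2 _]; apply: c_phi_degree.
Qed.
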